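(* Let $l\geq 2$ be an integer and set $Q(\lambda,R):=P_l(\lambda,R-\lambda)$. Then $Q$ is a polynomial that contains the monomials $\lambda^l$ and $R$ with non-zero coefficients and contains no monomials $\lambda^k$ with $k\neq l$.
   Context: For $l\in\mathbb N$ and $\mu\in\mathbb C$, $H_l$ is the tridiagonal $l\times l$ matrix with entries $H_{l;jj}=(1-j)(l-j+1)$, $H_{l;j,j+1}=\mu j$, $H_{l;j,j-1}=\mu(l-j+1)$, and $H_{l;ij}=0$ if $|i-j|\geq 2$; $\det(H_l+\lambda\,\mathrm{Id})$ is a polynomial of degree $l$ in $(\lambda,\mu^2)$, written $P_l(\lambda,\mu^2)$. Thus $Q(\lambda,R)$ is $\det(H_l+\lambda\,\mathrm{Id})$ after the substitution $\mu^2=R-\lambda$. *)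

From HB Require Import structures.
From mathcomp Require Import all_boot all_order all_algebra.
From mathcomp Require Import mpoly.
Set Implicit Arguments. Unset Strict Implicit. Unset Printing Implicit Defensive.
Import Order.TTheory GRing.Theory Num.Theory.
Local Open Scope ring_scope.

(* The tridiagonal l x l matrix H_l(mu), with 1-based index j = i+1 for the
   0-based ordinal i:
     H_{j,j}   = (1-j)(l-j+1)  = - i * (l - i)
     H_{j,j+1} = mu * j        = mu * (i+1)
     H_{j,j-1} = mu * (l-j+1)  = mu * (l - i)                               *)
Definition Hmat (T : comNzRingType) (l : nat) (mu : T) : 'M[T]_l :=
  \matrix_(i < l, j < l)
    if (j : nat) == i then - ((i : nat)%:R * (l - i)%:R)
    else if (j : nat) == i.+1 then mu * (i.+1)%:R
    else if (i : nat) == j.+1 then mu * (l - i)%:R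
    else 0.

(* Bivariate integer polynomials; variable 0 is lambda, variable 1 is the
   second variable (mu, mu^2 or R depending on context). *)
Notation bipoly := {mpoly int[2]}.

Definition lamX : bipoly := 'X_(@ord0 1).
Definition varY : bipoly := 'X_(@ord_max 1).

Definition detH (l : nat) : bipoly := \det (Hmat l varY + lamX%:M).

Definition is_P (l : nat) (P : bipoly) : Prop :=
  P \mPo [tuple lamX; varY ^+ 2] = detH l.

Definition Qof (P : bipoly) : bipoly := P \mPo [tuple lamX; varY - lamX].

Definition mono (a b : nat) : 'X_{1..2} :=
  (U_(@ord0 1) *+ a + U_(@ord_max 1) *+ b)%MM.

From HB Require Import structures.
From mathcomp Require Import all_boot all_order all_algebra.
From mathcomp Require Import mpoly.
From mathcomp Require Import ring zify.
Set Implicit Arguments. Unset Strict Implicit. Unset Printing Implicit Defensive.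
Import GRing.Theory Num.Theory.
Local Open Scope ring_scope.

(* Expanding det(H_l + lambda) along its last row gives the three-term
   recurrence D_(k+2) = (lambda - c_(k+1)) D_(k+1) - mu^2 c_(k+1) D_k with
   c_i = i (l - i), so P_l obeys the same recurrence with mu^2 replaced by a
   variable, and P_l is unique because substituting mu^2 for that variable is
   injective on polynomials.  At R = 0
   the recurrence is solved by lambda^k, so Q(lambda, 0) = lambda^l.  At
   lambda = 0 the constant terms vanish from k = 1 on, and the coefficient of
   R is +-(c_1 ... c_(l-1)), which is non-zero. *)

Section TridiagonalDeterminant.
Variables (T : comNzRingType) (M : nat -> nat -> T).
Hypothesis M_lower : forall i j, (j.+1 < i)%N -> M i j = 0.
Hypothesis M_upper : forall i j, (i.+1 < j)%N -> M i j = 0.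

Definition lead_submx k : 'M[T]_k := \matrix_(i < k, j < k) M i j.

Lemma det_lead_submxSS k : \det (lead_submx k.+2) =
  M k.+1 k.+1 * \det (lead_submx k.+1) - M k.+1 k * M k k.+1 * \det (lead_submx k).
Proof.
rewrite (expand_det_row _ ord_max) big_ord_recr /= big_ord_recr /=.
rewrite big1 ?add0r; last first.
  move=> j _; rewrite /lead_submx mxE M_lower ?mul0r //= ltnS.
  exact: leq_trans (ltn_ord j) _.
rewrite /cofactor !mxE /=.
have -> : row' ord_max (col' ord_max (lead_submx k.+2)) = lead_submx k.+1.
  by apply/matrixP => i j; rewrite !mxE !lift_max.
set B := row' _ _.
rewrite (expand_det_col _ ord_max) big_ord_recr /=.
rewrite big1 ?add0r; last first.
  move=> i _; rewrite /B !mxE /= /bump leqnn.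
  have -> : (k < i)%N = false by rewrite ltnNge ltnW.
  by rewrite M_upper ?mul0r //= add0n add1n ltnS.
rewrite /cofactor /B !mxE /= /bump /= leqnn ltnn /= add0n add1n.
have -> : row' ord_max (col' ord_max B) = lead_submx k.
  apply/matrixP => -[i lt_ik] [j lt_jk]; rewrite !mxE /= /bump /=.
  have [ki kj] : (k <= i)%N = false /\ (k <= j)%N = false.
    by split; apply/negbTE; rewrite -ltnNge.
  by rewrite ki kj !add0n kj (leq_gtF (ltnW lt_ik)).
have sgn_even a : (-1) ^+ (a + a) = 1 :> T by rewrite -signr_odd addnn odd_double.
rewrite addSn exprS !sgn_even; ring.
Qed.

End TridiagonalDeterminant.

Section PowerSubstitution.
Variables (R : nzRingType) (n : nat) (e : 'I_n -> nat).

Definition pow_subst : n.-tuple {mpoly R[n]} := [tuple 'X_i ^+ e i | i < n].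

Definition mnm_scale (m : 'X_{1..n}) : 'X_{1..n} := [multinom (m i * e i)%N | i < n].

Lemma comp_pow_substX m : 'X_[m] \mPo pow_subst = 'X_[mnm_scale m].
Proof.
rewrite comp_mpolyX mpolyXE_id; apply: eq_bigr => i _.
by rewrite tnth_mktuple mnmE -exprM mulnC.
Qed.

Hypothesis e_gt0 : forall i, (0 < e i)%N.

Lemma mnm_scale_inj : injective mnm_scale.
Proof.
move=> m m' /mnmP eq_mm'; apply/mnmP => i.
by have := eq_mm' i; rewrite !mnmE => /eqP; rewrite eqn_pmul2r // => /eqP.
Qed.

Lemma mcoeff_comp_pow_subst p m : (p \mPo pow_subst)@_(mnm_scale m) = p@_m.
Proof.
rewrite comp_mpolyEX [in RHS](mpolyE p) !raddf_sum /=; apply: eq_bigr => m' _.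
by rewrite !mcoeffZ comp_pow_substX !mcoeffX (inj_eq mnm_scale_inj).
Qed.

Lemma comp_pow_subst_inj : injective (comp_mpoly pow_subst).
Proof.
by move=> p q eq_pq; apply/mpolyP => m; rewrite -!(mcoeff_comp_pow_subst _ m) eq_pq.
Qed.

End PowerSubstitution.

Section AxisRestriction.
Variables (R : comNzRingType) (n : nat) (i : 'I_n).

Definition axis_var (j : 'I_n) : {poly R} := if j == i then 'X else 0.

Definition mpoly_axis (p : {mpoly R[n]}) : {poly R} := mmap (@polyC R) axis_var p.

HB.instance Definition _ := GRing.RMorphism.copy mpoly_axis (mmap (@polyC R) axis_var).

Lemma mpoly_axisX j : mpoly_axis 'X_j = axis_var j.
Proof. by rewrite /mpoly_axis mmapX mmap1U. Qed.

Lemma coef_mmap1_axis m k : (mmap1 axis_var m)`_k = (m == U_(i) *+ k)%MM%:R.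
Proof.
rewrite /mmap1 (bigD1 i) //= /axis_var eqxx.
case: (boolP [exists j, (j != i) && (m j != 0%N)]) => [/existsP[j /andP[ne_ji mj_neq0]]|].
  rewrite (bigD1 j) //= (negbTE ne_ji) expr0n (negbTE mj_neq0) mul0r mulr0 coef0.
  suff /negbTE-> : m != (U_(i) *+ k)%MM by [].
  by apply: contra mj_neq0 => /eqP->; rewrite mulmnE mnm1E [i == j]eq_sym (negbTE ne_ji).
rewrite negb_exists => /forallP m_axis.
have m_off j : j != i -> m j = 0%N by move=> ne_ji; have := m_axis j; rewrite ne_ji negbK => /eqP.
rewrite big1 ?mulr1; last by move=> j ne_ji; rewrite (negbTE ne_ji) m_off.
rewrite coefXn; suff -> : (k == m i) = (m == (U_(i) *+ k)%MM) by [].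
apply/idP/idP => [/eqP->|/eqP->].
  apply/eqP/mnmP => j; rewrite mulmnE mnm1E.
  by case: (eqVneq i j) => [->|ne_ij]; rewrite ?mul1n // mul0n m_off // eq_sym.
by rewrite mulmnE mnm1E eqxx mul1n.
Qed.

Lemma coef_mpoly_axis p k : (mpoly_axis p)`_k = p@_(U_(i) *+ k)%MM.
Proof.
rewrite /mpoly_axis /mmap coef_sum [in RHS](mpolyE p) raddf_sum /=.
apply: eq_bigr => m _.
by rewrite coefCM coef_mmap1_axis mcoeffZ mcoeffX.
Qed.

End AxisRestriction.

(* [Hdiag l i] is at once minus the diagonal entry H_(i,i) and
   H_(i,i-1) H_(i-1,i) / mu^2 (0-based indices). *)
Definition Hdiag (l i : nat) : nat := (i * (l - i))%N.

(* [Hminor l x r k] is the k-th leading principal minor of H_l + x, with mu^2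
   written as r. *)
Section Hminor.
Variables (S : pzRingType) (l : nat) (x r : S).

Fixpoint Hminor (k : nat) : S :=
  match k with
  | 0 => 1
  | 1 => x
  | (k'.+1 as k1).+1 =>
      (x - (Hdiag l k1)%:R) * Hminor k1 - r * (Hdiag l k1)%:R * Hminor k'
  end.

Lemma HminorSS k : Hminor k.+2 =
  (x - (Hdiag l k.+1)%:R) * Hminor k.+1 - r * (Hdiag l k.+1)%:R * Hminor k.
Proof. by []. Qed.

Lemma Hminor0 : Hminor 0 = 1. Proof. by []. Qed.
Lemma Hminor1 : Hminor 1 = x. Proof. by []. Qed.

End Hminor.

Arguments Hminor : simpl never.

Lemma rmorph_Hminor (S S' : pzRingType) (f : {rmorphism S -> S'}) l x r k :
  f (Hminor l x r k) = Hminor l (f x) (f r) k.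
Proof.
elim/ltn_ind: k => -[|[|k]] IH; rewrite ?rmorph1 // !HminorSS.
by rewrite rmorphB !rmorphM rmorphB !rmorph_nat !IH.
Qed.

Lemma Hminor_oppr (S : comPzRingType) l (x : S) k : Hminor l x (- x) k = x ^+ k.
Proof.
elim/ltn_ind: k => -[|[|k]] IH //; rewrite HminorSS !IH // !exprS; ring.
Qed.

Lemma Hminor00 (S : pzRingType) l k : Hminor l 0 0 k.+1 = 0 :> S.
Proof.
elim/ltn_ind: k => -[|k] IH //.
by rewrite HminorSS IH // !(mulr0, mul0r) subr0.
Qed.

Lemma coef1_Hminor0X (R : comNzRingType) l k :
  (Hminor l 0 'X k.+2 : {poly R})`_1 = (-1) ^+ k.+1 * \prod_(1 <= i < k.+2) (Hdiag l i)%:R.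
Proof.
have Hminor_coef0 j : (Hminor l 0 'X j.+1 : {poly R})`_0 = 0.
  by rewrite -horner_coef0 -horner_evalE rmorph_Hminor rmorph0 /= horner_evalE hornerX Hminor00.
have coef1 j : (Hminor l 0 'X j.+2 : {poly R})`_1 =
    - ((Hminor l 0 'X j.+1)`_1 *+ Hdiag l j.+1) - (Hminor l 0 'X j)`_0 *+ Hdiag l j.+1.
  by rewrite HminorSS sub0r mulNr coefB coefN -mulrA coefXM /= !mulr_natl !coefMn.
elim: k => [|k IH]; rewrite coef1.
  by rewrite Hminor0 Hminor1 coef0 mul0rn oppr0 sub0r coefC big_nat1 mulN1r.
rewrite Hminor_coef0 mul0rn subr0 IH [in RHS]big_nat_recr //= [in RHS]exprS.
ring.
Qed.

Lemma coef1_Hminor0X_neq0 (R : numDomainType) l k :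
  (k.+2 <= l)%N -> (Hminor l 0 'X k.+2 : {poly R})`_1 != 0.
Proof.
move=> le_kl; rewrite coef1_Hminor0X mulf_neq0 ?signr_eq0 // prodf_seq_neq0.
apply/allP => i; rewrite mem_index_iota => /andP[i_gt0 lt_ik] /=.
rewrite pnatr_eq0 muln_eq0; apply/norP; split; apply/eqP; lia.
Qed.

Definition Hentry (l i j : nat) : bipoly :=
  (if j == i then - (i%:R * (l - i)%:R)
   else if j == i.+1 then varY * (i.+1)%:R
   else if i == j.+1 then varY * (l - i)%:R
   else 0) + lamX *+ (i == j).

Lemma Hentry_off_band l i j : (j.+1 < i)%N || (i.+1 < j)%N -> Hentry l i j = 0.
Proof.
move=> far; rewrite /Hentry; have [/negbTE-> /negbTE-> /negbTE-> /negbTE->] :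
  [/\ j != i, j != i.+1, i != j.+1 & i != j] by split; apply/eqP; lia.
by rewrite add0r mulr0n.
Qed.

Lemma detH_lead_submx l : detH l = \det (lead_submx (Hentry l) l).
Proof. by congr (\det _); apply/matrixP => i j; rewrite !mxE. Qed.

Lemma det_lead_submx_Hentry l k :
  \det (lead_submx (Hentry l) k) = Hminor l lamX (varY ^+ 2) k.
Proof.
elim/ltn_ind: k => -[|[|k]] IH.
- by rewrite det_mx00.
- by rewrite det_mx11 mxE /Hentry /= mul0r oppr0 add0r.
rewrite det_lead_submxSS => [|i j lt_ji|i j lt_ij]; last 2 first.
- by rewrite Hentry_off_band // lt_ji.
- by rewrite Hentry_off_band // lt_ij orbT.
rewrite !IH // HminorSS /Hentry /Hdiag !eqxx.
have [-> -> ->] : [/\ (k == k.+1) = false, (k.+1 == k) = false & (k == k.+2) = false].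
  by split; apply/negbTE/eqP; lia.
rewrite /= natrM; ring.
Qed.

Theorem proposition2p1 (l : nat) (hl : (2 <= l)%N) :
  (exists P : bipoly, is_P l P) /\
  (forall P : bipoly, is_P l P ->
     let Q := Qof P in
     Q@_(mono l 0) != 0 /\
     Q@_(mono 0 1) != 0 /\
     (forall k : nat, k <> l -> Q@_(mono k 0) = 0)).
Proof.
have coef_R_neq0 : (Hminor l 0 'X l : {poly int})`_1 != 0.
  by case: l hl => [|[|l]] // _; apply: coef1_Hminor0X_neq0.
pose P0 := Hminor l lamX varY l.
have P0_spec : is_P l P0.
  rewrite /is_P detH_lead_submx det_lead_submx_Hentry rmorph_Hminor /lamX /varY /=.
  by rewrite !comp_mpolyXU.
pose e (j : 'I_2) := if j == ord0 then 1%N else 2%N.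
have e_gt0 j : (0 < e j)%N by rewrite /e; case: ifP.
have t2E : [tuple lamX; varY ^+ 2] = pow_subst int e.
  apply: eq_from_tnth => j; rewrite tnth_mktuple (tnth_nth 0).
  case: j => -[|[|//]] lt_j2; rewrite ?expr1 /lamX /varY /=.
  - by rewrite (_ : Ordinal lt_j2 = ord0) //; apply: val_inj.
  - by rewrite (_ : Ordinal lt_j2 = ord_max) //; apply: val_inj.
split; first by exists P0.
move=> P P_spec.
have -> : P = P0.
  by apply: (comp_pow_subst_inj e_gt0); rewrite /= -t2E P_spec P0_spec.
have QE : Qof P0 = Hminor l lamX (varY - lamX) l.
  by rewrite /Qof rmorph_Hminor /lamX /varY /= !comp_mpolyXU.
have axis_lam : mpoly_axis ord0 (Qof P0) = 'X^l.
  by rewrite QE rmorph_Hminor rmorphB /= !mpoly_axisX /axis_var /= sub0r Hminor_oppr.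
have axis_R : mpoly_axis ord_max (Qof P0) = Hminor l 0 'X l.
  by rewrite QE rmorph_Hminor rmorphB /= !mpoly_axisX /axis_var /= subr0.
have coef_lam k : (Qof P0)@_(mono k 0) = (k == l)%:R.
  by rewrite /mono mulm0n addm0 -coef_mpoly_axis axis_lam coefXn.
have coef_R : (Qof P0)@_(mono 0 1) = (Hminor l 0 'X l)`_1.
  by rewrite /mono mulm0n add0m -[U_(_)%MM]mulm1n -coef_mpoly_axis axis_R.
rewrite /= coef_R coef_lam eqxx oner_neq0; split=> //; split=> // k /eqP/negbTE ne_kl.
by rewrite coef_lam ne_kl.
Qed.
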